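(* Let $M(x,y)=M(q,\nu,t,w,1;x,y)$ and define the kernel $$K(x,y)=1-\frac{x^2ywt(\nu-1)}{x-1}-\frac{xy^2t}{y-1}-xyt(x\nu-1)M(x,1)-xywt\big((\nu-1)(y-1)+qy\big)M(1,y).$$ Set $x=1+ts$, where $s$ is a new indeterminate. Then there are exactly two series $Y$ in $\mathbb{Q}(q,\nu,w,s)[[t]]$ satisfying $K(1+ts,Y)=0$; denote them $Y_1,Y_2$. Their constant terms are $1$ and $\frac{s}{w(\nu-1)}$ respectively, and the coefficient of $t$ in $Y_1$ is $\frac{s}{w-w\nu+s}$ (in particular it is non-zero).
   Context: A planar map is a proper embedding of a connected planar graph (loops and multiple edges allowed) in the oriented sphere, up to orientation-preserving homeomorphism; it is rooted by distinguishing a corner (sector between consecutive edges around a vertex), whose vertex and face are the root-vertex and root-face; degrees are counted with multiplicity; the atomic map (one vertex, no edge) is included. $e(M),v(M),f(M)$ are numbers of edges, vertices, faces; $d_v(M),d_f(M)$ the degrees of root-vertex and root-face. The Potts polynomial of a graph $G$ is $P_G(q,\nu)=\sum_{c:V(G)\to\{1,\dots,q\}}\nu^{m(c)}$, $m(c)$ = number of monochromatic edges (loops always monochromatic), regarded as a polynomial in $q,\nu$ (divisible by $q$). $M(q,\nu,t,w,z;x,y)=\frac1q\sum_{M}t^{e(M)}w^{v(M)-1}z^{f(M)-1}x^{d_v(M)}y^{d_f(M)}P_M(q,\nu)$ summed over rooted planar maps, a series in $t$ with coefficients in $\mathbb{Q}[q,\nu,w,z,x,y]$. *)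

From HB Require Import structures.
From mathcomp Require Import all_boot all_order all_fingroup all_algebra.
From Stdlib Require Import ClassicalEpsilon.
Set Implicit Arguments. Unset Strict Implicit. Unset Printing Implicit Defensive.
Import Order.TTheory GRing.Theory Num.Theory.
Local Open Scope ring_scope.

(* Tower of polynomial rings: PQ = Q[q], PN = Q[q][nu], PW = ..[w],   *)
(* PS = ..[s]; F is the fraction field of PS.                          *)
Definition PQ := {poly rat}.
Definition PN := {poly PQ}.
Definition PW := {poly PN}.
Definition PS := {poly PW}.
Definition F := {fraction PS}.

Definition sF : F := tofrac ('X : PS).
Definition wF : F := tofrac (('X : PW)%:P : PS).
Definition nuF : F := tofrac ((('X : PN)%:P : PW)%:P : PS).
Definition qF : F := tofrac (((('X : PQ)%:P : PN)%:P : PW)%:P : PS).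
(* embedding of a polynomial in (q, nu) (outer variable nu, inner q) *)
Definition embQN (p : PN) : F := tofrac ((p%:P : PW)%:P : PS).

(* Combinatorial maps with n.+1 edges.  Half-edges: pairs (j, b), edge *)
(* j : 'I_n.+1; alpha (j,b) = (j, ~~ b) is the fixed edge involution;  *)
(* sigma (a permutation) gives the cyclic order around vertices;       *)
(* faces are the cycles of phi = sigma o alpha.  The root corner is    *)
(* the one at half-edge (0,false).                                     *)
Definition hedge (n : nat) := ('I_n.+1 * bool)%type.
Definition alpha n (h : hedge n) : hedge n := (h.1, ~~ h.2).
Lemma alphaK n : cancel (@alpha n) (@alpha n).
Proof. by case=> j b; rewrite /alpha /= negbK. Qed.
Definition alphaP n : {perm hedge n} := perm (can_inj (@alphaK n)).
Definition root n : hedge n := (ord0, false).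

(* face permutation phi h = sigma (alpha h)  (mathcomp: (a * s) x = s (a x)) *)
Definition facep n (s : {perm hedge n}) : {perm hedge n} := alphaP n * s.

Definition nverts n (s : {perm hedge n}) : nat := #|porbits s|.
Definition nfaces n (s : {perm hedge n}) : nat := #|porbits (facep s)|.
Definition rootvdeg n (s : {perm hedge n}) : nat := #|porbit s (root n)|.
Definition rootfdeg n (s : {perm hedge n}) : nat := #|porbit (facep s) (root n)|.

(* connected (the group <sigma, alpha> is transitive) and planar (genus 0) *)
Definition connectedb n (s : {perm hedge n}) : bool :=
  [forall h, connect [rel a b | (b == s a) || (b == alpha a)] (root n) h].
Definition planarb n (s : {perm hedge n}) : bool :=
  connectedb s && (nverts s + nfaces s == n.+1 + 2)%N.
Definition planar_sigmas n : {set {perm hedge n}} := [set s | planarb s].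

(* root-preserving relabelings compatible with alpha; rooted planar maps  *)
(* with n.+1 edges = orbits of planar_sigmas under conjugation by these.  *)
Definition relabel n : {set {perm hedge n}} :=
  [set t : {perm hedge n} | [forall h, t (alpha h) == alpha (t h)] && (t (root n) == root n)].
Definition rooted_maps n : {set {set {perm hedge n}}} :=
  [set (s ^: relabel n)%g | s in planar_sigmas n].

(* Potts polynomial of the underlying graph (vertices = sigma-cycles,     *)
(* edge j joins the vertices of (j,false),(j,true)).                      *)
Definition colsum n (s : {perm hedge n}) (k : nat) : PQ :=
  \sum_(c : {ffun hedge n -> 'I_k} | [forall h, c (s h) == c h])
     'X ^+ #|[set j : 'I_n.+1 | c (j, false) == c (j, true)]|.
(* P_M(q,nu) regarded as a polynomial in q, nu: the element of Q[q][nu]   *)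
(* (written here with outer variable nu) whose specialisation at every    *)
(* positive integer q = k is the colouring sum.                           *)
Definition potts n (s : {perm hedge n}) : PN :=
  epsilon (inhabits 0) (fun P : PN =>
    forall k : nat, (0 < k)%N -> map_poly (fun a : PQ => a.[k%:R]) P = colsum s k).

(* Coefficient of t^e in M(q,nu,t,w,z;x,y): a polynomial in x (outer)  *)
(* and y (inner) over F.                                                *)
Definition map_weight n (z : F) (s : {perm hedge n}) : {poly {poly F}} :=
  ((qF^-1 * embQN (potts s) * wF ^+ (nverts s).-1 * z ^+ (nfaces s).-1)
      *: ('X ^+ rootfdeg s))%:P * 'X ^+ rootvdeg s.
Definition Mcoef (z : F) (e : nat) : {poly {poly F}} :=
  match e with
  | 0 => (qF^-1 * qF)%:P%:P   (* atomic map: v = f = 1, degrees 0, P = q *)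
  | n.+1 => \sum_(C in rooted_maps n) map_weight z (repr C)
  end.
(* coefficients of M(x,1) (poly in x) and of M(1,y) (poly in y), z = 1 *)
Definition Mx1coef (e : nat) : {poly F} := map_poly (fun p : {poly F} => p.[1]) (Mcoef 1 e).
Definition M1ycoef (e : nat) : {poly F} := (Mcoef 1 e).[1%:P].

Definition series := nat -> F.
Definition sconst (c : F) : series := fun n => if n == 0%N then c else 0.
Definition st : series := fun n => if n == 1%N then 1 else 0.
Definition sadd (a b : series) : series := fun n => a n + b n.
Definition ssub (a b : series) : series := fun n => a n - b n.
Definition smul (a b : series) : series :=
  fun n => \sum_(i < n.+1) a i * b (n - i)%N.
Definition spow (a : series) (k : nat) : series := iter k (smul a) (sconst 1).
Definition seval (p : {poly F}) (Y : series) : series :=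
  fun n => \sum_(i < size p) p`_i * spow Y i n.
Definition scomp (G : nat -> {poly F}) (Y : series) : series :=
  fun n => \sum_(e < n.+1) seval (G e) Y (n - e)%N.

Definition Xs : series := sadd (sconst 1) (smul st (sconst sF)).

(* (x-1)(y-1) K(x,y) at x = 1+ts, y = Y  (denominators cleared) *)
Definition Kcleared (Y : series) : series :=
  let x := Xs in
  let xm1 := ssub x (sconst 1) in
  let ym1 := ssub Y (sconst 1) in
  let c := sconst in
  let m := smul in
  ssub (ssub (ssub (ssub (m xm1 ym1)
     (m (m (m (m x x) Y) (m (c wF) st)) (m (c (nuF - 1)) ym1)))
     (m (m (m x (m Y Y)) st) xm1))
     (m (m xm1 ym1) (m (m (m (m x Y) st) (ssub (m x (c nuF)) (c 1))) (scomp Mx1coef x))))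
     (m (m xm1 ym1)
        (m (m (m (m x Y) (c wF)) st)
           (m (sadd (m (c (nuF - 1)) ym1) (m (c qF) Y)) (scomp M1ycoef Y)))).

(* Y solves K(1+ts, Y) = 0 in the fraction field of F[[t]]:  Y <> 1 and  *)
(* the denominator-cleared equation holds (F[[t]] is a domain, x-1 <> 0). *)
Definition Ksol (Y : series) : Prop :=
  (exists n, Y n != sconst 1 n) /\ (forall n, Kcleared Y n = 0).

From Pilot Require Import Defs.
From HB Require Import structures.
From mathcomp Require Import all_boot all_order all_fingroup all_algebra zify ring.
Import GRing.Theory.
Set Implicit Arguments. Unset Strict Implicit. Unset Printing Implicit Defensive.
Local Open Scope ring_scope.

(** Write a = w(nu - 1).  After multiplication by (x - 1)(y - 1), with
    x = 1 + ts, the coefficient of t^(n+1) of the kernel at y = Y depends only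
    on Y_0, ..., Y_n and is affine in Y_n with slope s + a - 2aY_0: every other
    occurrence of Y_n is multiplied by at least two factors vanishing at t = 0,
    among them all the terms involving M.  The coefficient of t is
    (Y_0 - 1)(s - aY_0), so Y_0 is 1 or s/a, and for these two values the slope
    is s - a or a - s, nonzero in Q(q, nu, w, s).  Hence the recursion on the
    coefficients determines exactly one solution for each constant term. *)

(** The series operations of [Defs] over an arbitrary commutative ring; those
    of [Defs] are their instances at [F].  Working over an abstract ring also
    keeps unification from unfolding the concrete field [F]. *)
Section FormalSeries.
Variable R : comNzRingType.

Definition fseries := nat -> R.
Definition fconst (c : R) : fseries := fun n => if n == 0%N then c else 0.
Definition ft : fseries := fun n => if n == 1%N then 1 else 0.
Definition fadd (a b : fseries) : fseries := fun n => a n + b n.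
Definition fsub (a b : fseries) : fseries := fun n => a n - b n.
Definition fmul (a b : fseries) : fseries :=
  fun n => \sum_(i < n.+1) a i * b (n - i)%N.
Definition fpow (a : fseries) (k : nat) : fseries := iter k (fmul a) (fconst 1).
Definition feval (p : {poly R}) (Y : fseries) : fseries :=
  fun n => \sum_(i < size p) p`_i * fpow Y i n.
Definition fcomp (G : nat -> {poly R}) (Y : fseries) : fseries :=
  fun n => \sum_(e < n.+1) feval (G e) Y (n - e)%N.

Lemma fconst0 c : fconst c 0 = c. Proof. by []. Qed.
Lemma fconstS c n : fconst c n.+1 = 0. Proof. by []. Qed.
Lemma ft0 : ft 0 = 0. Proof. by []. Qed.
Lemma ft1 : ft 1 = 1. Proof. by []. Qed.
Lemma ftSS n : ft n.+2 = 0. Proof. by []. Qed.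

Lemma fmul_coef0 a b : fmul a b 0 = a 0%N * b 0%N.
Proof. by rewrite /fmul big_ord1. Qed.

Lemma fmul_coefS a b n :
  fmul a b n.+1 = a 0%N * b n.+1 + \sum_(i < n.+1) a i.+1 * b (n - i)%N.
Proof. by rewrite /fmul big_ord_recl. Qed.

Lemma fmul_coefS_split a b n : fmul a b n.+1 =
  a 0%N * b n.+1 + \sum_(i < n) a i.+1 * b (n - i)%N + a n.+1 * b 0%N.
Proof. by rewrite fmul_coefS big_ord_recr /= subnn addrA. Qed.

Lemma fmul_coefSS_split a b n : fmul a b n.+2 =
  a 0%N * b n.+2 + a 1%N * b n.+1 + \sum_(i < n) a i.+2 * b (n - i)%N
  + a n.+2 * b 0%N.
Proof. by rewrite fmul_coefS_split big_ord_recl !addrA. Qed.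

Lemma fmul_coef1 a b : fmul a b 1 = a 0%N * b 1%N + a 1%N * b 0%N.
Proof. by rewrite fmul_coefS_split big_ord0 addr0. Qed.

Lemma fmul_coef2 a b :
  fmul a b 2 = a 0%N * b 2%N + a 1%N * b 1%N + a 2%N * b 0%N.
Proof. by rewrite fmul_coefSS_split big_ord0 addr0. Qed.

Lemma fmulC a b : fmul a b =1 fmul b a.
Proof.
move=> n; rewrite /fmul (reindex_inj rev_ord_inj); apply: eq_bigr => i _ /=.
by rewrite subSS subKn 1?mulrC // -ltnS.
Qed.

Lemma fmul_coef0_eq0l a b : a 0%N = 0 -> fmul a b 0 = 0.
Proof. by move=> a0; rewrite fmul_coef0 a0 mul0r. Qed.

Lemma fmul_coef0_eq0r a b : b 0%N = 0 -> fmul a b 0 = 0.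
Proof. by move=> b0; rewrite fmul_coef0 b0 mulr0. Qed.

End FormalSeries.

Arguments ft {R}.
Arguments ft0 {R}.
Arguments ft1 {R}.
Arguments ftSS {R}.

(** [perturb d m u u' k]: [u] and [u'] agree below [m] and [u m - u' m = k d].
    For [0 < m] products preserve this relation, since no [d^2] term can
    reach the coefficient of index [m]. *)
Section Perturbation.
Variables (R : comNzRingType) (d : R).
Implicit Types (u v : fseries R) (k l : R).

Definition perturb m u u' k : Prop :=
  (forall i, (i < m)%N -> u i = u' i) /\ u m = u' m + k * d.

Definition perturbs m u u' : Prop := exists k, perturb m u u' k.

Lemma perturb_ext m u v u' v' k : u =1 v -> u' =1 v' ->
  perturb m u u' k -> perturb m v v' k.
Proof. by move=> uv uv' [lo hi]; split=> [i /lo|]; rewrite -uv -uv'. Qed.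

Lemma perturb_refl m u : perturb m u u 0.
Proof. by split=> //; rewrite mul0r addr0. Qed.

Lemma perturb_add m u u' v v' k l : perturb m u u' k -> perturb m v v' l ->
  perturb m (fadd u v) (fadd u' v') (k + l).
Proof.
move=> [ulo uhi] [vlo vhi]; split=> [i im|]; first by rewrite /fadd ulo ?vlo.
by rewrite /fadd uhi vhi mulrDl addrACA.
Qed.

Lemma perturb_sub m u u' v v' k l : perturb m u u' k -> perturb m v v' l ->
  perturb m (fsub u v) (fsub u' v') (k - l).
Proof.
move=> [ulo uhi] [vlo vhi]; split=> [i im|]; first by rewrite /fsub ulo ?vlo.
by rewrite /fsub uhi vhi mulrBl opprD addrACA.
Qed.

Lemma perturb_scale m c u u' k : perturb m u u' k ->
  perturb m (fun i => c * u i) (fun i => c * u' i) (c * k).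
Proof. by move=> [lo hi]; split=> [i /lo ->|] //; rewrite hi mulrDr mulrA. Qed.

Lemma perturb_mul m u u' v v' k l : (0 < m)%N ->
  perturb m u u' k -> perturb m v v' l ->
  perturb m (fmul u v) (fmul u' v') (k * v' 0%N + u' 0%N * l).
Proof.
case: m => // m _ [ulo uhi] [vlo vhi]; split=> [i im|].
  by apply: eq_bigr => -[j hj] _; rewrite ulo ?vlo //=; lia.
rewrite !fmul_coefS_split uhi vhi ulo // vlo //.
rewrite (eq_bigr (fun i : 'I_m => u' i.+1 * v' (m - i)%N)); first by ring.
by move=> -[i hi] _; rewrite ulo ?vlo //=; lia.
Qed.

(** Multiplying by a series vanishing at [0] raises the order by one. *)
Lemma perturb_mulS m u u' v v' k l : (0 < m)%N ->
  perturb m.+1 u u' k -> u' 0%N = 0 -> perturb m v v' l ->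
  perturb m.+1 (fmul u v) (fmul u' v') (k * v' 0%N + u' 1%N * l).
Proof.
case: m => // m _ [ulo uhi] u'0 [vlo vhi].
have u0 : u 0%N = 0 by rewrite ulo.
split=> [[_|i im]|]; first by rewrite !fmul_coef0 u0 u'0 !mul0r.
  rewrite !fmul_coefS u0 u'0 !mul0r !add0r.
  by apply: eq_bigr => -[j hj] _; rewrite ulo ?vlo //=; lia.
rewrite !fmul_coefSS_split u0 u'0 !mul0r !add0r uhi vhi ulo // vlo //.
rewrite (eq_bigr (fun i : 'I_m => u' i.+2 * v' (m - i)%N)); first by ring.
by move=> -[i hi] _; rewrite ulo ?vlo //=; lia.
Qed.

Lemma perturb_Smul m u u' v v' k l : (0 < m)%N ->
  perturb m v v' l -> perturb m.+1 u u' k -> u' 0%N = 0 ->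
  perturb m.+1 (fmul v u) (fmul v' u') (k * v' 0%N + u' 1%N * l).
Proof.
move=> m0 pv pu u'0.
exact: perturb_ext (fmulC u v) (fmulC u' v') (perturb_mulS m0 pu u'0 pv).
Qed.

Lemma perturbs_mul m u u' v v' : (0 < m)%N ->
  perturbs m u u' -> perturbs m v v' -> perturbs m (fmul u v) (fmul u' v').
Proof. by move=> m0 [k pu] [l pv]; eexists; apply: perturb_mul m0 pu pv. Qed.

Lemma perturbs_mulS m u u' v v' : (0 < m)%N ->
  perturbs m.+1 u u' -> u' 0%N = 0 -> perturbs m v v' ->
  perturbs m.+1 (fmul u v) (fmul u' v').
Proof. by move=> m0 [k pu] u'0 [l pv]; eexists; exact: perturb_mulS m0 pu u'0 pv. Qed.

Lemma perturbs_add m u u' v v' :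
  perturbs m u u' -> perturbs m v v' -> perturbs m (fadd u v) (fadd u' v').
Proof. by move=> [k pu] [l pv]; exists (k + l); apply: perturb_add. Qed.

Lemma perturb_mul00 m u u' v v' :
  perturbs m.+1 u u' -> u' 0%N = 0 -> perturbs m.+1 v v' -> v' 0%N = 0 ->
  perturb m.+1 (fmul u v) (fmul u' v') 0.
Proof.
move=> [k [ulo _]] u'0 [l [vlo _]] v'0.
have u0 : u 0%N = 0 by rewrite ulo.
have v0 : v 0%N = 0 by rewrite vlo.
split=> [[_|i im]|]; first by rewrite !fmul_coef0 u0 u'0 !mul0r.
  rewrite !fmul_coefS u0 u'0 !mul0r !add0r.
  by apply: eq_bigr => -[j hj] _; rewrite ulo ?vlo //=; lia.
rewrite !fmul_coefS_split u0 u'0 v0 v'0 !mul0r !mulr0 !add0r !addr0.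
by apply: eq_bigr => -[i hi] _; rewrite ulo ?vlo //=; lia.
Qed.

Lemma perturbs_pow m Y Y' : (0 < m)%N ->
  perturbs m Y Y' -> forall j, perturbs m (fpow Y j) (fpow Y' j).
Proof.
move=> m0 pY; elim=> [|j IH]; first by exists 0; apply: perturb_refl.
exact: perturbs_mul.
Qed.

Lemma perturbs_eval m p Y Y' : (0 < m)%N ->
  perturbs m Y Y' -> perturbs m (feval p Y) (feval p Y').
Proof.
move=> m0 /(perturbs_pow m0) pYj; rewrite /feval; elim: (size p) => [|N [k IH]].
  by exists 0; apply: perturb_ext (perturb_refl m (fun=> 0)) => i; rewrite big_ord0.
have [l pN] := pYj N; exists (k + p`_N * l).
apply: perturb_ext (perturb_add IH (perturb_scale p`_N pN)) => i;
  by rewrite /fadd big_ord_recr.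
Qed.

(** Only the [e = 0] summand of [fcomp G Y] reaches index [m] with [Y_m]. *)
Lemma perturbs_comp m G Y Y' : (0 < m)%N ->
  perturbs m Y Y' -> perturbs m (fcomp G Y) (fcomp G Y').
Proof.
move=> m0 pY; have pG e := perturbs_eval (G e) m0 pY.
have [k0 [_ hi0]] := pG 0%N; exists k0; split.
  move=> i im; apply: eq_bigr => e _; have [ke [lo _]] := pG e.
  by apply: lo; apply: leq_ltn_trans im; apply: leq_subr.
case: m m0 pY pG hi0 => // m _ _ pG hi0.
rewrite /fcomp big_ord_recl [in RHS]big_ord_recl subn0 hi0 addrAC; congr (_ + _).
congr (_ + _); apply: eq_bigr => -[e he] _; have [ke [lo _]] := pG e.+1.
by apply: lo; rewrite lift0; lia.
Qed.
End Perturbation.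

Section Kernel.
Variables (R : comNzRingType) (s w nu q : R) (M1 M2 : nat -> {poly R}).

Local Notation a := (w * (nu - 1)).

Definition x_series : fseries R := fadd (fconst 1) (fmul ft (fconst s)).

Local Notation x := x_series.
Local Notation xm1 := (fsub x_series (fconst 1)).
Local Notation ym1 Y := (fsub Y (fconst 1)).

Definition kernel_x2y_term (Y : fseries R) : fseries R :=
  fmul (fmul (fmul (fmul x x) Y) (fmul (fconst w) ft)) (fmul (fconst (nu - 1)) (ym1 Y)).

Definition kernel_xy2_term (Y : fseries R) : fseries R :=
  fmul (fmul (fmul x (fmul Y Y)) ft) xm1.

Definition kernel_Mx1_term (Y : fseries R) : fseries R :=
  fmul (fmul xm1 (ym1 Y))
    (fmul (fmul (fmul (fmul x Y) ft) (fsub (fmul x (fconst nu)) (fconst 1))) (fcomp M1 x)).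

Definition kernel_M1y_term (Y : fseries R) : fseries R :=
  fmul (fmul xm1 (ym1 Y))
    (fmul (fmul (fmul (fmul x Y) (fconst w)) ft)
       (fmul (fadd (fmul (fconst (nu - 1)) (ym1 Y)) (fmul (fconst q) Y)) (fcomp M2 Y))).

Definition kernel_series (Y : fseries R) : fseries R :=
  fsub (fsub (fsub (fsub (fmul xm1 (ym1 Y)) (kernel_x2y_term Y)) (kernel_xy2_term Y))
    (kernel_Mx1_term Y)) (kernel_M1y_term Y).

Definition kernel_slope (y : R) : R := s - (a * (y - 1) + a * y).

Lemma x_series_coef0 : x 0 = 1.
Proof. by rewrite /x_series /fadd fmul_coef0 ft0 mul0r addr0. Qed.

Lemma x_series_coef1 : x 1 = s.
Proof. by rewrite /x_series /fadd fmul_coef1 ft0 ft1 !fconstS mul0r mul1r !add0r. Qed.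

Lemma x_series_coef2 : x 2 = 0.
Proof. by rewrite /x_series /fadd fmul_coef2 ft0 ft1 ftSS !fconstS; ring. Qed.

Lemma x_series_sub1_coef0 : xm1 0 = 0.
Proof. by rewrite /fsub x_series_coef0 subrr. Qed.

Lemma x_series_sub1_coef1 : xm1 1 = s.
Proof. by rewrite /fsub x_series_coef1 fconstS subr0. Qed.

Lemma kernel_coef0 Y : kernel_series Y 0 = 0.
Proof.
rewrite /kernel_series /kernel_x2y_term /kernel_xy2_term /kernel_Mx1_term.
by rewrite /kernel_M1y_term /fsub !fmul_coef0 ft0 x_series_coef0 !fconst0; ring.
Qed.

Lemma kernel_coef1 Y : kernel_series Y 1 = (Y 0%N - 1) * (s - a * Y 0%N).
Proof.
rewrite /kernel_series /kernel_x2y_term /kernel_xy2_term /kernel_Mx1_term.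
rewrite /kernel_M1y_term /fsub !fmul_coef1 !fmul_coef0 ft0 ft1.
by rewrite x_series_coef0 x_series_coef1 !fconst0 !fconstS; ring.
Qed.

Lemma kernel_const1_coef2 : kernel_series (fconst 1) 2 = - s.
Proof.
rewrite /kernel_series /kernel_x2y_term /kernel_xy2_term /kernel_Mx1_term.
rewrite /kernel_M1y_term /fsub !fmul_coef2 !fmul_coef1 !fmul_coef0 ft0 ft1 ftSS.
by rewrite x_series_coef0 x_series_coef1 x_series_coef2 !fconst0 !fconstS; ring.
Qed.

Section KernelPerturbation.
Variables (n : nat) (Y Y' : fseries R).
Hypotheses (n_gt0 : (0 < n)%N) (eqY : forall i, (i < n)%N -> Y i = Y' i).

Local Notation d := (Y n - Y' n).

Lemma perturb_Y : perturb d n Y Y' 1.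
Proof. by split=> //; rewrite mul1r addrC subrK. Qed.

Lemma perturb_ym1 : perturb d n (ym1 Y) (ym1 Y') 1.
Proof. by have := perturb_sub perturb_Y (perturb_refl d n (fconst 1)); rewrite subr0. Qed.

Lemma perturb_xm1_ym1 : perturb d n.+1 (fmul xm1 (ym1 Y)) (fmul xm1 (ym1 Y')) s.
Proof.
have [lo hi] :=
  perturb_mulS n_gt0 (perturb_refl d n.+1 xm1) x_series_sub1_coef0 perturb_ym1.
by split=> //; rewrite hi x_series_sub1_coef1 mul0r mulr1 add0r.
Qed.

Lemma perturb_x2y_term :
  perturb d n.+1 (kernel_x2y_term Y) (kernel_x2y_term Y') (a * (Y' 0%N - 1) + a * Y' 0%N).
Proof.
have px := perturb_refl d n x.
have wt0 : fmul (fconst w) ft 0 = 0 := fmul_coef0_eq0r _ ft0.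
have [lo hi] := perturb_mulS n_gt0
  (perturb_Smul n_gt0 (perturb_mul n_gt0 (perturb_mul n_gt0 px px) perturb_Y)
     (perturb_refl d n.+1 (fmul (fconst w) ft)) wt0)
  (fmul_coef0_eq0r _ wt0)
  (perturb_mul n_gt0 (perturb_refl d n (fconst (nu - 1))) perturb_ym1).
split=> //; rewrite /kernel_x2y_term hi; congr (_ + _ * _).
rewrite /fsub !fmul_coef1 !fmul_coef0 x_series_coef0 x_series_coef1 ft0 ft1.
by rewrite !fconst0 !fconstS; ring.
Qed.

Lemma perturb_xy2_term : perturb d n.+1 (kernel_xy2_term Y) (kernel_xy2_term Y') 0.
Proof.
have px := perturb_refl d n x.
apply: perturb_mul00 _ (fmul_coef0_eq0r _ ft0) _ x_series_sub1_coef0.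
  eexists; apply: perturb_Smul n_gt0 _ (perturb_refl d n.+1 ft) ft0.
  exact: perturb_mul n_gt0 px (perturb_mul n_gt0 perturb_Y perturb_Y).
by exists 0; apply: perturb_refl.
Qed.

(** The two terms involving [M] are of this form, with [u] divisible by [t]. *)
Lemma perturb_xm1_ym1_mul u u' : perturbs d n.+1 u u' -> u' 0%N = 0 ->
  perturb d n.+1 (fmul (fmul xm1 (ym1 Y)) u) (fmul (fmul xm1 (ym1 Y')) u') 0.
Proof.
move=> pu u'0; apply: perturb_mul00 (fmul_coef0_eq0l _ x_series_sub1_coef0) pu u'0.
by exists s; apply: perturb_xm1_ym1.
Qed.

Lemma perturb_Mx1_term : perturb d n.+1 (kernel_Mx1_term Y) (kernel_Mx1_term Y') 0.
Proof.
have pxYt := perturb_Smul n_gt0 (perturb_mul n_gt0 (perturb_refl d n x) perturb_Y)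
  (perturb_refl d n.+1 ft) ft0.
apply: perturb_xm1_ym1_mul.
  apply: perturbs_mulS n_gt0 _ _ (ex_intro _ _ (perturb_refl d n (fcomp M1 x))).
    apply: perturbs_mulS n_gt0 (ex_intro _ _ pxYt) (fmul_coef0_eq0r _ ft0) _.
    by exists 0; apply: perturb_refl.
  exact: fmul_coef0_eq0l (fmul_coef0_eq0r _ ft0).
exact: fmul_coef0_eq0l (fmul_coef0_eq0l _ (fmul_coef0_eq0r _ ft0)).
Qed.

Lemma perturb_M1y_term : perturb d n.+1 (kernel_M1y_term Y) (kernel_M1y_term Y') 0.
Proof.
have pxYwt := perturb_Smul n_gt0 (perturb_mul n_gt0
  (perturb_mul n_gt0 (perturb_refl d n x) perturb_Y) (perturb_refl d n (fconst w)))
  (perturb_refl d n.+1 ft) ft0.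
apply: perturb_xm1_ym1_mul; last exact: fmul_coef0_eq0l (fmul_coef0_eq0r _ ft0).
apply: perturbs_mulS n_gt0 (ex_intro _ _ pxYwt) (fmul_coef0_eq0r _ ft0) _.
apply: perturbs_mul n_gt0 _ (perturbs_comp M2 n_gt0 (ex_intro _ _ perturb_Y)).
apply: perturbs_add; eexists.
  exact: perturb_mul n_gt0 (perturb_refl d n _) perturb_ym1.
exact: perturb_mul n_gt0 (perturb_refl d n _) perturb_Y.
Qed.
End KernelPerturbation.

Lemma kernel_coefS n Y Y' : (0 < n)%N -> (forall i, (i < n)%N -> Y i = Y' i) ->
  kernel_series Y n.+1 = kernel_series Y' n.+1 + kernel_slope (Y' 0%N) * (Y n - Y' n).
Proof.
move=> n_gt0 eqY; rewrite /kernel_series.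
have [_ ->] := perturb_sub (perturb_sub (perturb_sub (perturb_sub
  (perturb_xm1_ym1 n_gt0 eqY) (perturb_x2y_term n_gt0 eqY)) (perturb_xy2_term n_gt0 eqY))
  (perturb_Mx1_term n_gt0 eqY)) (perturb_M1y_term n_gt0 eqY).
by rewrite /kernel_slope; congr (_ + _ * _); ring.
Qed.
End Kernel.

Section KernelRoots.
Variables (R : fieldType) (s w nu q : R) (M1 M2 : nat -> {poly R}).

Local Notation a := (w * (nu - 1)).
Local Notation K := (kernel_series s w nu q M1 M2).
Local Notation slope := (kernel_slope s w nu).

(** The root with constant term [c0], truncated after [t^k]; by
    [kernel_coefS] its next coefficient solves an affine equation. *)
Fixpoint kernel_root_trunc (c0 : R) (k : nat) : fseries R :=
  if k is k'.+1 then
    fun i => if i == k then - K (kernel_root_trunc c0 k') k.+1 / slope c0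
             else kernel_root_trunc c0 k' i
  else fconst c0.

Definition kernel_root (c0 : R) : fseries R := fun i => kernel_root_trunc c0 i i.

Lemma kernel_root_trunc_high c0 k i : (k < i)%N -> kernel_root_trunc c0 k i = 0.
Proof.
elim: k i => [|k IH] [|i] //= ki; rewrite ltnS in ki.
by rewrite eqSS (gtn_eqF ki) IH // ltnW.
Qed.

Lemma kernel_root_trunc_low c0 k i :
  (i <= k)%N -> kernel_root_trunc c0 k i = kernel_root c0 i.
Proof.
elim: k => [|k IH] ik; first by case: i ik.
rewrite /=; case: eqP => [->|/eqP ne]; first by rewrite /kernel_root /= eqxx.
by apply: IH; rewrite -ltnS ltn_neqAle ne.
Qed.

Lemma kernel_root_coef0 c0 : kernel_root c0 0 = c0.
Proof. by []. Qed.

Lemma kernel_root_coef1 c0 :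
  kernel_root c0 1 = - K (fconst c0) 2 / slope c0.
Proof. by []. Qed.

Lemma kernel_root_solves c0 : K (fconst c0) 1 = 0 -> slope c0 != 0 ->
  forall n, K (kernel_root c0) n = 0.
Proof.
move=> root_c0 slope_neq0 [|[|k]]; first exact: kernel_coef0.
  by rewrite kernel_coef1 kernel_root_coef0 -[RHS]root_c0 kernel_coef1.
rewrite (@kernel_coefS _ _ _ _ _ _ _ k.+1 _ (kernel_root_trunc c0 k)) //; last first.
  by move=> i ik; rewrite kernel_root_trunc_low.
rewrite kernel_root_trunc_low // kernel_root_trunc_high // subr0 /kernel_root /= eqxx.
by rewrite mulrC divfK // addrN.
Qed.

Lemma kernel_root_unique c0 Y : (forall n, K Y n = 0) -> Y 0%N = c0 -> slope c0 != 0 ->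
  (forall n, K (kernel_root c0) n = 0) -> Y =1 kernel_root c0.
Proof.
move=> KY Y0 slope_neq0 Kroot.
suff eqY n i : (i <= n)%N -> Y i = kernel_root c0 i by move=> n; apply: (eqY n).
elim: n i => [|n IH] i; first by case: i.
rewrite leq_eqVlt ltnS => /predU1P[-> | /IH //].
have := @kernel_coefS _ s w nu q M1 M2 n.+1 Y (kernel_root c0) isT (fun i => IH i).
rewrite !KY Kroot kernel_root_coef0 add0r => /esym/eqP.
by rewrite mulf_eq0 (negbTE slope_neq0) subr_eq0 => /eqP.
Qed.

Definition kernel_solution (Y : fseries R) : Prop :=
  (exists n, Y n != fconst 1 n) /\ (forall n, K Y n = 0).

Hypotheses (s_neq0 : s != 0) (a_neq0 : a != 0) (s_neq_a : s - a != 0).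

Lemma mul_root2 : a * (s / a) = s.
Proof. by rewrite mulrC divfK. Qed.

Lemma root2_neq1 : s / a != 1.
Proof.
by apply: contraNneq s_neq_a => root2_eq1; rewrite -{1}mul_root2 root2_eq1 mulr1 subrr.
Qed.

Lemma slope1 : slope 1 = s - a.
Proof. by rewrite /kernel_slope; ring. Qed.

Lemma slope_root2 : slope (s / a) = - (s - a).
Proof. by rewrite /kernel_slope mulrBr mul_root2; ring. Qed.

Lemma kernel_root1_coef1 : kernel_root 1 1 = s / (w - w * nu + s).
Proof.
rewrite kernel_root_coef1 kernel_const1_coef2 slope1 opprK.
by congr (_ / _); ring.
Qed.

Lemma kernel_root1_coef1_neq0 : kernel_root 1 1 != 0.
Proof.
rewrite kernel_root1_coef1 mulf_neq0 ?invr_neq0 //.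
by have -> : w - w * nu + s = s - a by ring.
Qed.

Lemma kernel_solution_root1 : kernel_solution (kernel_root 1).
Proof.
split; first by exists 1%N; rewrite fconstS kernel_root1_coef1_neq0.
by apply: kernel_root_solves; rewrite ?kernel_coef1 ?subrr ?mul0r ?slope1.
Qed.

Lemma kernel_solution_root2 : kernel_solution (kernel_root (s / a)).
Proof.
split; first by exists 0%N; rewrite kernel_root_coef0 fconst0 root2_neq1.
apply: kernel_root_solves; first by rewrite kernel_coef1 fconst0 mul_root2 subrr mulr0.
by rewrite slope_root2 oppr_eq0.
Qed.

Lemma kernel_solutionP Y : kernel_solution Y ->
  Y =1 kernel_root 1 \/ Y =1 kernel_root (s / a).
Proof.
case=> _ KY; have /eqP := KY 1%N; rewrite kernel_coef1 mulf_eq0 !subr_eq0.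
case/orP=> /eqP Y0; [left | right]; apply: kernel_root_unique => //.
- by rewrite slope1.
- exact: kernel_solution_root1.2.
- by rewrite Y0 mulrC mulKf.
- by rewrite slope_root2 oppr_eq0.
- exact: kernel_solution_root2.2.
Qed.

Theorem kernel_roots : exists Y1 Y2 : fseries R,
  [/\ (exists n, Y1 n != Y2 n), kernel_solution Y1, kernel_solution Y2,
      (forall Y, kernel_solution Y -> (forall n, Y n = Y1 n) \/ (forall n, Y n = Y2 n)) &
      [/\ Y1 0%N = 1, Y2 0%N = s / a, Y1 1%N = s / (w - w * nu + s) & Y1 1%N != 0]].
Proof.
exists (kernel_root 1), (kernel_root (s / a)); split.
- by exists 0%N; rewrite !kernel_root_coef0 eq_sym root2_neq1.
- exact: kernel_solution_root1.
- exact: kernel_solution_root2.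
- exact: kernel_solutionP.
- by split=> //; [exact: kernel_root1_coef1 | exact: kernel_root1_coef1_neq0].
Qed.
End KernelRoots.

Lemma sF_neq0 : sF != 0.
Proof. by rewrite tofrac_eq0 polyX_eq0. Qed.

Lemma nuF_sub1 : nuF - 1 = tofrac (((('X - 1%:P : PN)%:P : PW)%:P : PS)).
Proof. by rewrite /nuF -tofrac1 -tofracB !polyCB !polyC1. Qed.

Lemma aF_neq0 : wF * (nuF - 1) != 0.
Proof.
rewrite nuF_sub1 -tofracM tofrac_eq0 mulf_eq0 negb_or !polyC_eq0 polyX_eq0 /=.
exact/negbT/polyXsubC_eq0.
Qed.

Lemma sF_sub_aF_neq0 : sF - wF * (nuF - 1) != 0.
Proof.
rewrite nuF_sub1 -tofracM -tofracB tofrac_eq0 -polyCM.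
exact/negbT/polyXsubC_eq0.
Qed.

Theorem lemma6p1 :
  exists Y1 Y2 : series,
    [/\ (exists n, Y1 n != Y2 n),
        Ksol Y1, Ksol Y2,
        (forall Y : series, Ksol Y -> (forall n, Y n = Y1 n) \/ (forall n, Y n = Y2 n)) &
        [/\ Y1 0%N = 1,
            Y2 0%N = sF / (wF * (nuF - 1)),
            Y1 1%N = sF / (wF - wF * nuF + sF) &
            Y1 1%N != 0]].
Proof. exact: kernel_roots sF_neq0 aF_neq0 sF_sub_aF_neq0. Qed.
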